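(* Every sawed tree $F$ admits a plane drawing $d=(d_1,d_2)$ with $d_2(x)=\mathrm{height}(x)$ for every $x\in F$.
   Context: A finite tree is a finite rooted poset in which each $\downarrow x$ is a chain; $\mathrm{Top}(T)$ is its set of maximal elements and $\mathrm{height}(x)$ is the maximum of $|C|-1$ over chains $C\subseteq\downarrow x$. Let $T$ be a finite tree of height $>0$ all of whose top elements have the same height, with a plane ordering $\prec$ of $\mathrm{Top}(T)$ (a linear order such that each $\uparrow x\cap\mathrm{Top}(T)$ is a $\prec$-interval); enumerate $\mathrm{Top}(T)=\{t_1\prec\cdots\prec t_k\}$. The sawed tree based on $(T,\prec)$ is the poset obtained from $T$ by adding new elements $s_1,\dots,s_{k-1}$ with $t_i<s_i$ and $t_{i+1}<s_i$ for each $i$ (and the relations forced by transitivity). A plane drawing of a poset $G$ is an injection $d=(d_1,d_2)\colon G\to\mathbb R^2$ such that, drawing a straight edge from $d(x)$ to $d(y)$ whenever $y$ is an immediate successor of $x$, $x<y$ implies $d_2(x)<d_2(y)$ and distinct edges meet only at common endpoints. *)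

From mathcomp Require Import all_boot all_order all_algebra.
From mathcomp Require Import reals.
Set Implicit Arguments. Unset Strict Implicit. Unset Printing Implicit Defensive.
Import Order.TTheory GRing.Theory Num.Theory.

Section Posets.
Variables (V : finType) (le : rel V).

Definition is_poset : Prop :=
  [/\ reflexive le, antisymmetric le & transitive le].

Definition lt_of (x y : V) : bool := (x != y) && le x y.

Definition covers (x y : V) : bool :=
  lt_of x y && [forall z, ~~ (lt_of x z && lt_of z y)].

Definition is_chain (C : {set V}) : bool :=
  [forall x in C, forall y in C, le x y || le y x].

Definition downset (x : V) : {set V} := [set y | le y x].

Definition height (x : V) : nat :=
  \max_(C : {set V} | is_chain C && (C \subset downset x)) #|C|.-1.

Definition is_top (t : V) : bool := [forall y, le t y ==> (y == t)].

Definition finite_tree : Prop :=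
  [/\ is_poset, (exists r, forall x, le r x) & forall x, is_chain (downset x)].

(* plane ordering of Top(T), given as the enumeration t_1 < ... < t_k *)
Definition plane_order (tops : seq V) : Prop :=
  [/\ uniq tops,
      (forall t, (t \in tops) = is_top t) &
      (forall x (i j k : nat), i <= j -> j <= k -> k < size tops ->
         le x (nth x tops i) -> le x (nth x tops k) -> le x (nth x tops j))].

End Posets.

(* The sawed tree based on (T, tops): carrier T + {s_0, ..., s_(k-2)} where
   s_i sits above t_i and t_(i+1) (0-indexed); this is the order generated
   (transitively closed) by T's order and t_i < s_i, t_(i+1) < s_i. *)
Definition sawed_le (T : finType) (le : rel T) (tops : seq T) :
    rel (T + 'I_(size tops).-1)%type :=
  fun u v =>
    match u, v with
    | inl x, inl y => le x y
    | inl x, inr i => le x (nth x tops i) || le x (nth x tops i.+1)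
    | inr i, inr j => i == j
    | inr _, inl _ => false
    end.

Section Drawing.
Variable R : realType.
Local Open Scope ring_scope.

Definition on_segment (p q P : R * R) : Prop :=
  exists t : R, 0 <= t /\ t <= 1 /\
    P = ((1 - t) * p.1 + t * q.1, (1 - t) * p.2 + t * q.2).

Definition plane_drawing (V : finType) (le : rel V) (d : V -> R * R) : Prop :=
  [/\ injective d,
      (forall x y, lt_of le x y -> (d x).2 < (d y).2) &
      (forall x1 y1 x2 y2, covers le x1 y1 -> covers le x2 y2 ->
         (x1, y1) <> (x2, y2) ->
         forall P, on_segment (d x1) (d y1) P -> on_segment (d x2) (d y2) P ->
           exists v, [&& (v == x1) || (v == y1) & (v == x2) || (v == y2)]
                     /\ P = d v)].
End Drawing.
Arguments sawed_le [T] le tops _ _.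

From mathcomp Require Import all_boot all_order all_algebra.
From mathcomp Require Import reals.
From mathcomp Require Import ring lra zify.
Import Order.TTheory GRing.Theory Num.Theory.
Set Implicit Arguments. Unset Strict Implicit.

(* The drawing is explicit: the sawed tree element u is placed at
   (column u, height u), where an element x of T sits in the even column
   2 * first_top x (first_top x being the position, in the plane order, of the
   first maximal element above x) and the saw tooth s_i sits in column 2i + 1,
   between t_i and t_(i+1).
   - In a forest (a poset whose downsets are chains) the height of x is the
     number of elements below x, so heights grow by exactly one along covers.
   - In the sawed tree, T keeps its heights and every s_i has height h + 1,
     h being the common height of the tops; its covers are those of T together
     with t_i, t_(i+1) below s_i.  Column and height determine an element, and,
     thanks to the interval property of the plane order, two covers starting at
     the same height never swap their left-to-right order.
   - Geometrically, a drawing by levels in which covers join consecutive levels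
     and same-level covers never swap order is plane: two edges can only meet at
     a common endpoint. *)

Section Height.
Variables (V : finType) (le : rel V).

Lemma chainP (C : {set V}) a b :
  is_chain le C -> a \in C -> b \in C -> le a b || le b a.
Proof. by move=> /forall_inP/(_ a) H /H/forall_inP; apply. Qed.

Lemma height_le x n :
  (forall C, is_chain le C -> C \subset downset le x -> #|C|.-1 <= n) ->
  height le x <= n.
Proof. by move=> H; apply/bigmax_leqP => C /andP[]; apply: H. Qed.

Lemma height_ge x C :
  is_chain le C -> C \subset downset le x -> #|C|.-1 <= height le x.
Proof.
move=> chC subC; apply: (@leq_bigmax_cond _
  (fun C : {set V} => is_chain le C && (C \subset downset le x)) (fun C => #|C|.-1)).
by rewrite chC subC.
Qed.

Lemma height_chain_downset x :
  is_chain le (downset le x) -> height le x = #|downset le x|.-1.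
Proof.
move=> chDx; apply/eqP; rewrite eqn_leq height_ge // andbT.
by apply: height_le => C _ subC; rewrite -!subn1 leq_sub2r // subset_leq_card.
Qed.

End Height.

Section Forest.
Variables (T : finType) (le : rel T).
Hypotheses (le_po : is_poset le) (chD : forall x, is_chain le (downset le x)).

Let le_refl : reflexive le. Proof. by case: le_po. Qed.
Let le_anti : antisymmetric le. Proof. by case: le_po. Qed.
Let le_trans : transitive le. Proof. by case: le_po. Qed.

Lemma comparable_below x a b : le a x -> le b x -> le a b || le b a.
Proof. by move=> ax bx; apply: (chainP (chD x)); rewrite inE. Qed.

Lemma downset_subset x y : le x y -> downset le x \subset downset le y.
Proof. by move=> xy; apply/subsetP => z; rewrite !inE => /le_trans; apply. Qed.

Lemma card_downset_gt0 x : 0 < #|downset le x|.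
Proof. by apply/card_gt0P; exists x; rewrite inE le_refl. Qed.

Lemma height_downset x : height le x = #|downset le x|.-1.
Proof. exact: height_chain_downset. Qed.

(* chains below x are chains below any y above x *)
Lemma height_mono x y : le x y -> height le x <= height le y.
Proof.
move=> xy; apply: height_le => C chC subC.
exact: height_ge chC (subset_trans subC (downset_subset xy)).
Qed.

Lemma card_downset_lt x y : le x y -> x != y -> #|downset le x| < #|downset le y|.
Proof.
move=> xy neq; apply: proper_card; rewrite properE downset_subset //=.
apply/subsetPn; exists y; rewrite !inE ?le_refl //; apply: contra neq => yx.
by apply/eqP/le_anti; rewrite xy yx.
Qed.

Lemma height_lt x y : le x y -> x != y -> height le x < height le y.
Proof.
move=> xy neq; rewrite !height_downset.
by have := card_downset_lt xy neq; have := card_downset_gt0 x; lia.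
Qed.

Lemma height_inj_below x y t :
  le x t -> le y t -> height le x = height le y -> x = y.
Proof.
move=> xt yt eh; apply/eqP/negPn/negP => neq.
have /orP[xy|yx] := comparable_below xt yt.
  by have := height_lt xy neq; rewrite eh ltnn.
by have := height_lt yx; rewrite eq_sym eh ltnn => /(_ neq).
Qed.

Lemma height_cover x y : covers le x y -> height le y = (height le x).+1.
Proof.
case/andP => /andP[neq xy] /forallP noz; rewrite !height_downset.
have -> : downset le y = y |: downset le x.
  apply/setP => z; rewrite !inE; apply/idP/idP; last first.
    by case/orP => [/eqP ->|/le_trans]; [rewrite le_refl | apply].
  move=> zy; have /orP[->|xz] := comparable_below zy xy; first by rewrite orbT.
  case: (eqVneq z y) => //= nzy; case: (eqVneq x z) => [<-|nxz]; first exact: le_refl.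
  by have := noz z; rewrite /lt_of nxz xz nzy zy.
rewrite cardsU1 inE; have := card_downset_gt0 x.
suff -> : ~~ le y x by move=> /=; lia.
by apply: contra neq => yx; apply/eqP/le_anti; rewrite xy yx.
Qed.

Lemma top_above x : exists2 t, is_top le t & le x t.
Proof.
case: (@arg_maxnP T x (le x) (fun y => #|downset le y|) (le_refl x)) => t xt tmax.
exists t => //; apply/forall_inP => y ty; apply/negPn/negP => neq.
have := tmax y (le_trans xt ty); rewrite /geq /= leqNgt.
by rewrite card_downset_lt // eq_sym.
Qed.

End Forest.

Section SawedTree.
Variables (T : finType) (le : rel T) (tops : seq T) (h : nat) (x0 : T).
Hypotheses (le_po : is_poset le) (chD : forall x, is_chain le (downset le x))
  (htop : forall t, is_top le t -> height le t = h)
  (plane : plane_order le tops).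

Let le_refl : reflexive le. Proof. by case: le_po. Qed.
Let le_trans : transitive le. Proof. by case: le_po. Qed.

Local Notation U := (T + 'I_(size tops).-1)%type.
Local Notation S := (sawed_le le tops).
Local Notation tp i := (nth x0 tops i).

Lemma saw_bounds (i : 'I_(size tops).-1) : i < size tops /\ i.+1 < size tops.
Proof. by have := ltn_ord i; split; lia. Qed.

Lemma tops_top i : i < size tops -> is_top le (tp i).
Proof. by case: plane => _ topsE _ lti; rewrite -topsE mem_nth. Qed.

Lemma tops_height i : i < size tops -> height le (tp i) = h.
Proof. by move=> lti; apply/htop/tops_top. Qed.

(* since all maximal elements have height h, every element has height <= h *)
Lemma height_le_top_height x : height le x <= h.
Proof. by have [t /htop <-] := top_above le_po x; apply: height_mono. Qed.

Definition first_top (x : T) : nat := find (le x) tops.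

Lemma has_top_above x : has (le x) tops.
Proof.
have [t tt xt] := top_above le_po x.
by apply/hasP; exists t => //; case: plane => _ ->.
Qed.

Lemma first_top_lt x : first_top x < size tops.
Proof. by rewrite /first_top -has_find has_top_above. Qed.

Lemma le_first_top x : le x (tp (first_top x)).
Proof. exact: nth_find (has_top_above x). Qed.

Lemma first_top_nth j : j < size tops -> first_top (tp j) = j.
Proof.
move=> ltj; have /forall_inP/(_ _ (le_first_top (tp j))) := tops_top ltj.
by case: plane => uniq_tops _ _; rewrite nth_uniq ?first_top_lt // => /eqP.
Qed.

Lemma sawed_le_inl_inr b (i : 'I_(size tops).-1) :
  S (inl b) (inr i) = le b (tp i) || le b (tp i.+1).
Proof.
by case: (saw_bounds i) => lti lti1; rewrite /= !(set_nth_default x0 b).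
Qed.

(* nothing added lies below an element of T *)
Lemma sawed_downset_inl x : downset S (inl x) = inl @: downset le x.
Proof.
apply/setP => -[a|j]; rewrite !inE /=.
  by rewrite mem_imset ?inE //; move=> ? ? [].
by apply/esym/imsetP => -[].
Qed.

Lemma sawed_chain_inl (C : {set T}) : is_chain le C -> is_chain S (inl @: C).
Proof.
move=> chC; apply/forall_inP => _ /imsetP[a aC ->]; apply/forall_inP => _ /imsetP[b bC ->].
exact: chainP chC aC bC.
Qed.

Lemma sawed_height_inl x : height S (inl x) = height le x.
Proof.
rewrite height_chain_downset sawed_downset_inl; last exact/sawed_chain_inl/chD.
by rewrite card_imset ?(height_downset chD) //; move=> ? ? [].
Qed.

Definition saw_chain (i : 'I_(size tops).-1) (t : T) : {set U} :=
  inr i |: inl @: downset le t.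

Lemma card_saw_chain i t : #|saw_chain i t| = #|downset le t|.+1.
Proof.
rewrite cardsU1 card_imset; last by move=> ? ? [].
by have -> : inr i \notin inl @: downset le t by apply/imsetP => -[].
Qed.

Lemma saw_chainP (i : 'I_(size tops).-1) t :
  t = tp i \/ t = tp i.+1 ->
  is_chain S (saw_chain i t) /\ saw_chain i t \subset downset S (inr i).
Proof.
move=> ti; have below a : le a t -> S (inl a) (inr i).
  by move=> at_; rewrite sawed_le_inl_inr; case: ti at_ => <- ->; rewrite ?orbT.
have mem u : u \in saw_chain i t -> u = inr i \/ exists2 a, u = inl a & le a t.
  by rewrite !inE => /orP[/eqP->|/imsetP[a]]; [left | rewrite inE; right; exists a].
split.
  apply/forall_inP => u /mem[->|[a -> at_]]; apply/forall_inP => v /mem[->|[b -> bt]].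
  - by rewrite /= eqxx.
  - by rewrite below ?orbT.
  - by rewrite below.
  - exact: comparable_below at_ bt.
by apply/subsetP => u /mem[->|[a -> /below]]; rewrite inE //= eqxx.
Qed.

Lemma chain_below_saw (i : 'I_(size tops).-1) (C : {set U}) :
  is_chain S C -> C \subset downset S (inr i) ->
  exists2 t, t = tp i \/ t = tp i.+1 & C \subset saw_chain i t.
Proof.
move=> chC subC; have inC u : u \in C -> S u (inr i) by move/(subsetP subC); rewrite inE.
have fits t : (forall b, inl b \in C -> le b t) -> C \subset saw_chain i t.
  move=> Ct; apply/subsetP => -[b|j] uC; rewrite !inE.
    by rewrite mem_imset ?inE ?Ct ?orbT //; move=> ? ? [].
  by have /= /eqP -> := inC _ uC; rewrite eqxx.
have [allCi|] := boolP [forall b, (inl b \in C) ==> le b (tp i)].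
  by exists (tp i); [left | apply: fits => b; move/forall_inP: allCi; apply].
rewrite negb_forall => /existsP[a]; rewrite negb_imply => /andP[aC nai].
have ai1 : le a (tp i.+1) by have := inC _ aC; rewrite sawed_le_inl_inr (negbTE nai).
exists (tp i.+1); [by right | apply: fits => b bC].
have /orP[bi|//] : le b (tp i) || le b (tp i.+1) by rewrite -sawed_le_inl_inr inC.
have /orP[ab|ba] := chainP chC aC bC; last exact: le_trans ba ai1.
by move: nai; rewrite (le_trans ab bi).
Qed.

Lemma sawed_height_inr (i : 'I_(size tops).-1) : height S (inr i) = h.+1.
Proof.
have card_tops t : t = tp i \/ t = tp i.+1 -> #|downset le t| = h.+1.
  case: (saw_bounds i) => lti lti1 ti.
  have <- : height le t = h by case: ti => ->; apply: tops_height.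
  by rewrite (height_downset chD) prednK // (card_downset_gt0 le_po).
apply/eqP; rewrite eqn_leq; apply/andP; split.
  apply: height_le => C chC subC; have [t ti subCt] := chain_below_saw chC subC.
  by have := subset_leq_card subCt; rewrite card_saw_chain card_tops //; case: #|C|.
have ti : tp i = tp i \/ tp i = tp i.+1 by left.
have [chS subS] := saw_chainP ti.
by have := height_ge chS subS; rewrite card_saw_chain card_tops.
Qed.

Lemma sawed_height_lt u v : lt_of S u v -> height S u < height S v.
Proof.
case: u v => [x|i] [y|j] //; rewrite /lt_of.
- by case/andP => neq xy; rewrite !sawed_height_inl (height_lt le_po chD xy).
- by rewrite sawed_height_inl sawed_height_inr ltnS height_le_top_height.
- by case/andP => /eqP neq /eqP eq_ij; case: neq; rewrite eq_ij.
Qed.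

Lemma sawed_covers_inl x y : covers S (inl x) (inl y) -> covers le x y.
Proof.
case/andP => /andP[neq /= xy] /forallP noz; apply/andP; split; first exact/andP.
by apply/forallP => z; apply: noz (inl z).
Qed.

Lemma sawed_covers_inr x (i : 'I_(size tops).-1) :
  covers S (inl x) (inr i) -> x = tp i \/ x = tp i.+1.
Proof.
case: (saw_bounds i) => lti lti1.
case/andP => /andP[_]; rewrite sawed_le_inl_inr => /orP[xt|xt] /forallP noz.
  left; apply/eqP/negPn/negP => neq; have := noz (inl (tp i)).
  by rewrite /lt_of /= neq xt (set_nth_default x0) ?le_refl.
right; apply/eqP/negPn/negP => neq; have := noz (inl (tp i.+1)).
by rewrite /lt_of /= neq xt (set_nth_default x0 _ lti1) le_refl orbT.
Qed.

Lemma sawed_covers_saw (i : 'I_(size tops).-1) v : ~~ covers S (inr i) v.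
Proof.
case: v => [y|j]; rewrite /covers /lt_of //=.
by apply/negP => /andP[/andP[/eqP neq /eqP eq_ij] _]; case: neq; rewrite eq_ij.
Qed.

Lemma sawed_height_cover u v : covers S u v -> height S v = (height S u).+1.
Proof.
case: u => [x|i]; last by rewrite (negbTE (sawed_covers_saw _ _)).
case: v => [y|j] cov.
  by rewrite !sawed_height_inl (height_cover le_po chD (sawed_covers_inl cov)).
have [lti lti1] := saw_bounds j.
by rewrite sawed_height_inl sawed_height_inr; case: (sawed_covers_inr cov) => ->;
  rewrite tops_height.
Qed.

Lemma first_top_mono x y : le x y -> first_top x <= first_top y.
Proof.
move=> xy; rewrite leqNgt; apply/negP => /(before_find x0).
by rewrite (le_trans xy (le_first_top y)).
Qed.

Lemma first_top_order x1 y1 x2 y2 :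
  le x1 y1 -> le x2 y2 -> height le x1 = height le x2 ->
  first_top x1 < first_top x2 -> first_top y1 < first_top y2.
Proof.
move=> xy1 xy2 eh lt12; apply: leq_trans (first_top_mono xy2); rewrite ltnNge.
apply/negP => le21; case: plane => _ _ interval.
have := interval x1 _ _ _ (ltnW lt12) le21 (first_top_lt y1).
rewrite !(set_nth_default x0 x1) ?first_top_lt //.
move=> /(_ (le_first_top x1) (le_trans xy1 (le_first_top y1))) x1t.
have ex : x1 = x2 := height_inj_below le_po chD x1t (le_first_top x2) eh.
by rewrite ex ltnn in lt12.
Qed.

Definition column (u : U) : nat :=
  match u with inl x => (first_top x).*2 | inr i => (i.*2).+1 end.

Lemma column_height_inj u v :
  column u = column v -> height S u = height S v -> u = v.
Proof.
case: u v => [x|i] [y|j] /=; first 1 last.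
- by move=> /(congr1 odd); rewrite odd_double /= odd_double.
- by move=> /(congr1 odd); rewrite odd_double /= odd_double.
- by move=> [/double_inj/val_inj ->].
move=> /double_inj eq_col; rewrite !sawed_height_inl => eh; congr inl.
by apply: (height_inj_below le_po chD (le_first_top x)) eh; rewrite eq_col le_first_top.
Qed.

Lemma sawed_covers_inr_height x (i : 'I_(size tops).-1) :
  covers S (inl x) (inr i) -> height le x = h.
Proof.
by have [lti lti1] := saw_bounds i; case/sawed_covers_inr => ->; rewrite tops_height.
Qed.

Lemma covers_height_lt x y : covers le x y -> height le x < h.
Proof. by move/(height_cover le_po chD); have := height_le_top_height y; lia. Qed.

Lemma column_cover_order u1 v1 u2 v2 :
  covers S u1 v1 -> covers S u2 v2 -> height S u1 = height S u2 ->
  v1 <> v2 -> column u1 < column u2 -> column v1 < column v2.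
Proof.
case: u1 => [x1|i]; last by rewrite (negbTE (sawed_covers_saw _ _)).
case: u2 => [x2|i]; last by move=> _; rewrite (negbTE (sawed_covers_saw _ _)).
rewrite !sawed_height_inl; case: v1 => [y1|j1]; case: v2 => [y2|j2] cov1 cov2 eh /=.
- move=> _; rewrite !ltn_double; apply: first_top_order eh.
    by case/andP: (sawed_covers_inl cov1) => /andP[].
  by case/andP: (sawed_covers_inl cov2) => /andP[].
- have := covers_height_lt (sawed_covers_inl cov1).
  by rewrite eh (sawed_covers_inr_height cov2) ltnn.
- have := covers_height_lt (sawed_covers_inl cov2).
  by rewrite -eh (sawed_covers_inr_height cov1) ltnn.
move=> neq; rewrite !ltn_double ltnS.
have neq' : j1 != j2 :> nat by apply: contra_not_neq neq => /val_inj ->.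
have [lt1 lt1'] := saw_bounds j1; have [lt2 lt2'] := saw_bounds j2.
have col1 : first_top x1 = j1 \/ first_top x1 = j1.+1.
  by case: (sawed_covers_inr cov1) => ->; rewrite first_top_nth //; [left|right].
have col2 : first_top x2 = j2 \/ first_top x2 = j2.+1.
  by case: (sawed_covers_inr cov2) => ->; rewrite first_top_nth //; [left|right].
by move: neq'; case: col1 => ->; case: col2 => ->; lia.
Qed.

End SawedTree.

Section LayeredDrawing.
Local Open Scope ring_scope.
Variables (R : realType) (V : finType) (le : rel V) (d : V -> R * R) (level : V -> nat).
Hypotheses (d_inj : injective d) (d_level : forall v, (d v).2 = (level v)%:R)
  (cover_level : forall x y, covers le x y -> level y = (level x).+1)
  (cover_order : forall x1 y1 x2 y2, covers le x1 y1 -> covers le x2 y2 ->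
     level x1 = level x2 -> y1 <> y2 -> (d x1).1 < (d x2).1 -> (d y1).1 < (d y2).1).

Definition edge_point (x y : V) (t : R) : R * R :=
  ((1 - t) * (d x).1 + t * (d y).1, (level x)%:R + t).

Lemma edge_point0 x y t : t = 0 -> edge_point x y t = d x.
Proof.
by move->; rewrite /edge_point [d x]surjective_pairing d_level /=; congr (_, _); ring.
Qed.

Lemma edge_point1 x y t : covers le x y -> t = 1 -> edge_point x y t = d y.
Proof.
move=> cov ->; rewrite /edge_point [d y]surjective_pairing d_level (cover_level cov) /=.
by congr (_, _); rewrite ?natr1 //; ring.
Qed.

Lemma on_cover_edge x y P : covers le x y -> on_segment (d x) (d y) P ->
  exists t, [/\ 0 <= t, t <= 1 & P = edge_point x y t].
Proof.
move=> cov [t [t0 [t1 ->]]]; exists t; split => //; rewrite /edge_point !d_level.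
by rewrite (cover_level cov) -natr1; congr (_, _); ring.
Qed.

Lemma same_level_column u v : level u = level v -> u <> v -> (d u).1 != (d v).1.
Proof.
move=> eq_lvl neq; apply/eqP => eq1; apply/neq/d_inj.
by rewrite [d u]surjective_pairing [d v]surjective_pairing eq1 !d_level eq_lvl.
Qed.

Lemma convex_lt (t a1 a2 b1 b2 : R) :
  0 <= t -> t <= 1 -> a1 < a2 -> b1 < b2 -> (1 - t) * a1 + t * b1 < (1 - t) * a2 + t * b2.
Proof.
move=> t0 t1 lta ltb.
have [t_small|t_big] := lerP t (1/2).
  have : 0 < (1 - t) * (a2 - a1) by apply: mulr_gt0; lra.
  have : 0 <= t * (b2 - b1) by apply: mulr_ge0; lra.
  lra.
have : 0 <= (1 - t) * (a2 - a1) by apply: mulr_ge0; lra.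
have : 0 < t * (b2 - b1) by apply: mulr_gt0; lra.
lra.
Qed.

Lemma edges_lower_upper x1 y1 x2 y2 t1 t2 :
  covers le x1 y1 -> (level x1 < level x2)%N ->
  0 <= t1 -> t1 <= 1 -> 0 <= t2 -> edge_point x1 y1 t1 = edge_point x2 y2 t2 ->
  y1 = x2 /\ edge_point x1 y1 t1 = d y1.
Proof.
move=> cov lt_lvl t10 t11 t20 eqP12.
have lvl : (level x1)%:R + 1 <= (level x2)%:R :> R by rewrite natr1 ler_nat.
have := congr1 snd eqP12; rewrite /= => eq2.
have t1E : t1 = 1 by lra.
have t2E : t2 = 0 by lra.
have dy1 : edge_point x1 y1 t1 = d y1 by apply: edge_point1.
split => //; apply: d_inj; by rewrite -dy1 eqP12 (edge_point0 _ _ t2E).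
Qed.

Lemma edges_same_level x1 y1 x2 y2 t :
  covers le x1 y1 -> covers le x2 y2 -> level x1 = level x2 -> (x1, y1) <> (x2, y2) ->
  0 <= t -> t <= 1 -> edge_point x1 y1 t = edge_point x2 y2 t ->
  (x1 = x2 /\ edge_point x1 y1 t = d x1) \/ (y1 = y2 /\ edge_point x1 y1 t = d y1).
Proof.
move=> cov1 cov2 eq_lvl neq t0 t1 eqP12.
have := congr1 fst eqP12; rewrite /= => eq1.
have eq_lvl' : level y1 = level y2 by rewrite (cover_level cov1) (cover_level cov2) eq_lvl.
have [ex|nex] := eqVneq x1 x2.
  left; split => //; rewrite ex in eq1 *.
  have /same_level_column : y1 <> y2 by move=> ey; apply: neq; rewrite ex ey.
  by move=> /(_ eq_lvl'); rewrite neq_lt => /orP[] lt; apply: edge_point0; nra.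
have [ey|ney] := eqVneq y1 y2.
  right; split => //; rewrite ey in eq1 cov1 *.
  have /same_level_column : x1 <> x2 by apply/eqP.
  by move=> /(_ eq_lvl); rewrite neq_lt => /orP[] lt; apply: (edge_point1 cov1); nra.
exfalso; have /same_level_column : x1 <> x2 by apply/eqP.
move=> /(_ eq_lvl); rewrite neq_lt => /orP[] lt.
  have := cover_order cov1 cov2 eq_lvl (elimN eqP ney) lt.
  by move/(convex_lt t0 t1 lt); rewrite eq1 ltxx.
have := cover_order cov2 cov1 (esym eq_lvl) (nesym (elimN eqP ney)) lt.
by move/(convex_lt t0 t1 lt); rewrite eq1 ltxx.
Qed.

Lemma layered_plane_drawing :
  (forall x y, lt_of le x y -> (level x < level y)%N) -> plane_drawing le d.
Proof.
move=> level_lt; split => // [x y /level_lt|x1 y1 x2 y2 cov1 cov2 neq P].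
  by rewrite !d_level ltr_nat.
case/(on_cover_edge cov1) => t1 [t10 t11 ->] /(on_cover_edge cov2) [t2 [t20 t21 eqP12]].
have [lt12|lt21|eq_lvl] := ltngtP (level x1) (level x2).
- have [-> ->] := edges_lower_upper cov1 lt12 t10 t11 t20 eqP12.
  by exists x2; rewrite !eqxx orbT.
- have [ey eP] := edges_lower_upper cov2 lt21 t20 t21 t10 (esym eqP12).
  by exists x1; rewrite eqP12 eP ey !eqxx orbT.
have t12 : t1 = t2 by move: (congr1 snd eqP12); rewrite /= eq_lvl; lra.
rewrite -t12 in eqP12.
have [[<- ->]|[<- ->]] := edges_same_level cov1 cov2 eq_lvl neq t10 t11 eqP12.
  by exists x1; rewrite !eqxx.
by exists y1; rewrite !eqxx !orbT.
Qed.

End LayeredDrawing.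

Local Open Scope ring_scope.

Theorem corollary7p6 (R : realType) (T : finType) (le : rel T) (tops : seq T) :
  finite_tree le ->
  (exists x : T, 0 < height le x)%N ->
  (exists h : nat, forall t : T, is_top le t -> height le t = h) ->
  plane_order le tops ->
  exists d : (T + 'I_(size tops).-1)%type -> R * R,
    plane_drawing (sawed_le le tops) d /\
    forall x, (d x).2 = ((height (sawed_le le tops) x)%:R : R).
Proof.
case=> [le_po [r _] chD] _ [h htop] plane.
pose S := sawed_le le tops.
pose d u : R * R := ((column le u)%:R, (height S u)%:R).
exists d; split => //; apply: (@layered_plane_drawing _ _ _ _ (height S)) => //.
- move=> u v [/eqP + /eqP]; rewrite !eqr_nat => /eqP eq_col /eqP eq_height.
  exact: (column_height_inj r le_po chD plane).
- exact: (sawed_height_cover r le_po chD htop plane).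
- move=> x1 y1 x2 y2 cov1 cov2 eq_height neq; rewrite /d /= !ltr_nat.
  exact: (column_cover_order r le_po chD htop plane).
- exact: (sawed_height_lt r le_po chD htop plane).
Qed.
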